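(* In the setting below, let $(m_j)_{j\in\mathbb{N}}$ be a strictly increasing sequence of natural numbers and $(\rho_j)_{j\in\mathbb{N}}$ a sequence of strictly positive reals. Suppose (1) there exists $K\ge 0$ such that $\mathbb{P}_X(S_{\rho_j})\le K\,\mathbb{P}_X(B_{\rho_j})$ for all $j$, and (2) $m_j\,\mathbb{P}_X(\bar B_{\rho_j})\to\infty$ as $j\to\infty$. Then $$\mathbb{E}\big[\mathbb{I}_{S_{\rho_j}}(X^x_{m_j})|\eta(X^x_{m_j})-\eta(x)|\big]\to 0\quad\text{as } j\to\infty.$$
   Context: Let $(\mathcal{X},d)$ be a metric space with its Borel $\sigma$-algebra, let $(\Omega,\mathcal{F},\mathbb{P})$ be a probability space, and let $X,X_1,X_2,\dots$ be i.i.d. $\mathcal{X}$-valued random variables with common law $\mathbb{P}_X$. For $x\in\mathcal{X}$ and $r>0$ write $B_r=\{x':d(x,x')<r\}$, $\bar B_r=\{x':d(x,x')\le r\}$ and $S_r=\{x':d(x,x')=r\}$. The support of $\mathbb{P}_X$ is the set of $x$ such that $\mathbb{P}_X(\bar B_r(x))>0$ for all $r>0$. Fix $x$ in the support of $\mathbb{P}_X$ and a bounded measurable $\eta:\mathcal{X}\to\mathbb{R}$. For each $m\in\mathbb{N}$, a nearest neighbor of $x$ among $X_1,\dots,X_m$ is a measurable $X^x_m:\Omega\to\mathcal{X}$ with $X^x_m(\omega)\in\arg\min_{x'\in\{X_1(\omega),\dots,X_m(\omega)\}}d(x,x')$ for every $\omega\in\Omega$; fix such a sequence $(X^x_m)_{m\in\mathbb{N}}$.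 *)

From HB Require Import structures.
From mathcomp Require Import all_boot all_order all_algebra.
From mathcomp Require Import all_classical all_reals all_analysis.
Set Implicit Arguments. Unset Strict Implicit. Unset Printing Implicit Defensive.
Import Order.TTheory GRing.Theory Num.Theory.
Local Open Scope classical_set_scope.
Local Open Scope ring_scope.

Section Defs.
Context {R : realType} {T : Type}.

Definition is_metric (dist : T -> T -> R) : Prop :=
  [/\ (forall x y, dist x y = 0 <-> x = y),
      (forall x y, dist x y = dist y x) &
      (forall x y z, dist x z <= dist x y + dist y z)].

Definition metric_open (dist : T -> T -> R) (U : set T) : Prop :=
  forall y, U y -> exists2 r : R, 0 < r & [set z | dist y z < r] `<=` U.

Definition oball (dist : T -> T -> R) (x : T) (r : R) : set T :=
  [set y | dist x y < r].
Definition cball (dist : T -> T -> R) (x : T) (r : R) : set T :=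
  [set y | dist x y <= r].
Definition sphere (dist : T -> T -> R) (x : T) (r : R) : set T :=
  [set y | dist x y = r].
End Defs.

Definition law {R : realType} {dO dT} {Omega : measurableType dO}
  {T : measurableType dT} (P : probability Omega R) (Y : Omega -> T)
  : set T -> \bar R := fun A => P (Y @^-1` A).

Definition mutually_independent {R : realType} {dO dT} {Omega : measurableType dO}
  {T : measurableType dT} (P : probability Omega R) (Y : nat -> Omega -> T) : Prop :=
  forall (s : seq nat) (A : nat -> set T), uniq s ->
    (forall i, i \in s -> measurable (A i)) ->
    P (\big[setI/setT]_(i <- s) (Y i @^-1` A i)) =
    (\prod_(i <- s) P (Y i @^-1` A i))%E.

Definition identically_distributed {R : realType} {dO dT} {Omega : measurableType dO}
  {T : measurableType dT} (P : probability Omega R) (Y : nat -> Omega -> T) : Prop :=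
  forall i (A : set T), measurable A -> law P (Y i) A = law P (Y 0%N) A.

From HB Require Import structures.
From mathcomp Require Import all_boot all_order all_algebra.
From mathcomp Require Import all_classical all_reals all_analysis.
From mathcomp Require Import lra.
Import Order.TTheory GRing.Theory Num.Theory.
Import measurable_realfun.
Local Open Scope classical_set_scope.
Local Open Scope ring_scope.

(* Write q_j = P_X(B_{rho_j}(x)) and n = m_j.  If the nearest
   neighbour X^x_n lies on the sphere S_{rho_j}(x), then no sample point
   X_1, ..., X_n lies in the open ball B_{rho_j}(x); by independence this
   event has probability (1 - q_j)^n.  Since eta is bounded by M, the
   integrand is bounded by 2M times the indicator of that event, so the
   expectation is at most 2M (1 - q_j)^n <= 2M / (1 + n q_j) by Bernoulli's
   inequality.  Finally the sphere-to-ball comparison (1) gives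
   P_X(\bar B_{rho_j}) <= (1 + K) q_j, so hypothesis (2) forces m_j q_j -> oo
   and the bound tends to 0.
   The file first proves the measurability of balls and spheres in a metric
   space whose Borel sets are generated by the metric open sets, then the
   probability of the "no sample point in A" event for an i.i.d. family, an
   integral bound by a scaled indicator, Bernoulli's inequality and two real
   limit lemmas; the theorem is assembled from these at the end. *)

Lemma bernoulli_ineq (R : realFieldType) (q : R) (n : nat) :
  0 <= q -> q <= 1 -> (1 - q) ^+ n * (1 + n%:R * q) <= 1.
Proof.
move=> q0 q1; elim: n => [|n IH]; first by rewrite expr0 mul0r addr0 mulr1.
have pow_ge0 : 0 <= (1 - q) ^+ n by apply: exprn_ge0; lra.
have step : (1 - q) * (1 + n.+1%:R * q) <= 1 + n%:R * q.
  by rewrite -natr1; have : 0 <= n%:R :> R by []; nra.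
rewrite exprSr -mulrA; exact: le_trans (ler_wpM2l pow_ge0 step) IH.
Qed.

Section MetricBalls.
Context {R : realType} {dT : measure_display} {T : measurableType dT}.
Variables (dist : T -> T -> R) (x : T).
Hypothesis dist_metric : is_metric dist.
Hypothesis measurable_metric : @measurable _ T = <<s metric_open dist >>.

Lemma measurable_oball r : measurable (oball dist x r).
Proof.
case: dist_metric => _ _ dtri; rewrite measurable_metric.
apply: sub_sigma_algebra => y /= hy.
exists (r - dist x y); first by rewrite subr_gt0.
by move=> z /= hz; rewrite /oball /=; have := dtri x y z; lra.
Qed.

Lemma measurable_cball r : measurable (cball dist x r).
Proof.
case: dist_metric => _ dsym dtri; rewrite -[cball _ _ _]setCK.
apply: measurableC; rewrite measurable_metric; apply: sub_sigma_algebra.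
move=> y /= /negP; rewrite -ltNge => hy.
exists (dist x y - r); first by rewrite subr_gt0.
move=> z /= hz; rewrite /cball /=; have := dtri x z y; rewrite (dsym z y); lra.
Qed.

Lemma sphereE r : sphere dist x r = cball dist x r `&` ~` oball dist x r.
Proof.
apply/seteqP; split => y; rewrite /sphere /cball /oball /=.
  by move=> ->; split; [exact: lexx | rewrite ltxx].
by move=> [h1 /negP h2]; apply/eqP; rewrite eq_le h1 leNgt.
Qed.

Lemma measurable_sphere r : measurable (sphere dist x r).
Proof.
rewrite sphereE; apply: measurableI; first exact: measurable_cball.
exact/measurableC/measurable_oball.
Qed.

Lemma cballE r : cball dist x r = oball dist x r `|` sphere dist x r.
Proof.
apply/seteqP; split => y; rewrite /cball /oball /sphere /=.
  by rewrite le_eqVlt => /orP[/eqP ->|->]; [right|left].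
by move=> [/ltW|->].
Qed.

End MetricBalls.

Definition avoid_event {Omega T : Type} (Y : nat -> Omega -> T) (n : nat)
  (A : set T) : set Omega :=
  \big[setI/setT]_(i <- iota 1 n) (Y i @^-1` ~` A).

Section IidSample.
Context {R : realType} {dO dT : measure_display}.
Context {Omega : measurableType dO} {T : measurableType dT}.
Variables (P : probability Omega R) (Xs : nat -> Omega -> T).
Hypothesis measurable_Xs : forall i, measurable_fun setT (Xs i).
Hypothesis Xs_indep : mutually_independent P Xs.
Hypothesis Xs_ident : identically_distributed P Xs.

Lemma measurable_preimage i {A} : measurable A -> measurable (Xs i @^-1` A).
Proof. by move=> mA; rewrite -(setTI (_ @^-1` _)); apply: measurable_Xs. Qed.

Lemma law_fineK A : measurable A ->
  law P (Xs 0%N) A = (fine (law P (Xs 0%N) A))%:E.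
Proof.
move=> mA; rewrite fineK // ge0_fin_numE ?measure_ge0 // /law.
exact: le_lt_trans (probability_le1 P (measurable_preimage _ mA)) (ltey _).
Qed.

Lemma law_fine_ge0 A : 0 <= fine (law P (Xs 0%N) A).
Proof. exact/fine_ge0/measure_ge0. Qed.

Lemma law_fine_le1 A : measurable A -> fine (law P (Xs 0%N) A) <= 1.
Proof.
move=> mA; rewrite -lee_fin -law_fineK //.
exact: probability_le1 (measurable_preimage _ mA).
Qed.

Lemma measurable_avoid_event n A :
  measurable A -> measurable (avoid_event Xs n A).
Proof.
move=> mA; rewrite /avoid_event; elim: (iota 1 n) => [|a s IH].
  by rewrite big_nil.
rewrite big_cons; apply: measurableI => //.
exact/measurable_preimage/measurableC.
Qed.

Lemma prob_avoid_event n A : measurable A ->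
  P (avoid_event Xs n A) = ((1 - fine (law P (Xs 0%N) A)) ^+ n)%:E.
Proof.
move=> mA; rewrite /avoid_event.
rewrite (Xs_indep (iota 1 n) (fun=> ~` A) (iota_uniq 1 n)
  (fun _ _ => measurableC mA)).
under eq_bigr => i _.
  rewrite -preimage_setC probability_setC; last exact: measurable_preimage.
  have -> : P (Xs i @^-1` A) = law P (Xs 0%N) A by exact: Xs_ident.
  rewrite law_fineK // -EFinB.
over.
rewrite prodEFin; congr EFin.
have -> : iota 1 n = index_iota 1 n.+1 by rewrite /index_iota subn1.
by rewrite prodr_const_nat subn1.
Qed.

Lemma law_setU_le A B (K : R) : measurable A -> measurable B ->
  (law P (Xs 0%N) B <= K%:E * law P (Xs 0%N) A)%E ->
  (law P (Xs 0%N) (A `|` B) <= ((1 + K) * fine (law P (Xs 0%N) A))%:E)%E.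
Proof.
move=> mA mB B_le; pose qA := fine (law P (Xs 0%N) A).
have lawA : law P (Xs 0%N) A = qA%:E := law_fineK _ mA.
apply: (@le_trans _ _ (law P (Xs 0%N) A + law P (Xs 0%N) B)%E).
  rewrite /law preimage_setU.
  exact: measureU2 (measurable_preimage _ mA) (measurable_preimage _ mB).
rewrite lawA in B_le *.
apply: le_trans (leeD (lexx _) B_le) _.
by rewrite -EFinM -EFinD lee_fin mulrDl mul1r.
Qed.

End IidSample.

Lemma nearest_on_sphere_avoid {R : realType} {Omega T : Type}
  (dist : T -> T -> R) (x : T) (Xs : nat -> Omega -> T) (y : T) n w r :
  (forall k, (1 <= k <= n)%N -> dist x y <= dist x (Xs k w)) ->
  sphere dist x r y -> avoid_event Xs n (oball dist x r) w.
Proof.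
move=> nearest y_sphere; rewrite /avoid_event big_seq.
apply: (@big_ind (set Omega) (fun S => S w)) => // k.
rewrite mem_iota add1n ltnS => k_range.
by apply/negP; rewrite -leNgt -y_sphere; apply: nearest.
Qed.

Lemma integral_le_scaled_indic {R : realType} {d : measure_display}
  {Omega : measurableType d} (mu : {measure set Omega -> \bar R})
  (f : Omega -> R) (E : set Omega) (C : R) :
  measurable E -> measurable_fun setT f -> 0 <= C ->
  (forall w, 0 <= f w <= C * \1_E w) ->
  (\int[mu]_w (f w)%:E <= C%:E * mu E)%E.
Proof.
move=> mE mf C0 f_bound.
have m_indic : measurable_fun setT (\1_E : Omega -> R) by exact: measurable_indic.
apply: (@le_trans _ _ (\int[mu]_w (C * \1_E w)%:E)%E).
  apply: ge0_le_integral => //.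
  - by move=> w _; rewrite lee_fin; case/andP: (f_bound w).
  - exact/measurable_EFinP.
  - exact/measurable_EFinP/measurable_funM.
  - by move=> w _; rewrite lee_fin; case/andP: (f_bound w).
under eq_integral do rewrite EFinM.
by rewrite ge0_integralZl_EFin ?integral_indic ?setIT //; exact/measurable_EFinP.
Qed.

Lemma cvgey_scaled_dominated {R : realType} (a : nat -> \bar R) (v : nat -> R)
  (k : R) : 0 < k -> (forall j, (a j <= (k * v j)%:E)%E) ->
  a @ \oo --> +oo%E -> v @ \oo --> +oo.
Proof.
move=> k_gt0 a_le /cvgeyPge a_large; apply/cvgryPge => A.
apply: filterS (a_large (k * A)) => j /le_trans/(_ (a_le j)).
by rewrite lee_fin ler_pM2l.
Qed.

Lemma cvg_div_one_plus_y {R : realType} (C : R) (u : nat -> R) :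
  0 <= C -> u @ \oo --> +oo -> (fun j => C / (1 + u j)) @ \oo --> 0.
Proof.
move=> C0 /cvgryPge u_large; apply/cvgrPdist_lt => e e0.
apply: filterS (u_large (C / e)) => j u_ge.
have u_ge0 : 0 <= u j by exact: le_trans (divr_ge0 C0 (ltW e0)) u_ge.
rewrite sub0r normrN ger0_norm ?divr_ge0 //; last lra.
rewrite ltr_pdivrMr; last lra.
by rewrite ler_pdivrMr // in u_ge; nra.
Qed.

Section SphereTerm.
Context {R : realType} {dT dO : measure_display}.
Context {T : measurableType dT} {Omega : measurableType dO}.
Variables (dist : T -> T -> R) (x : T) (P : probability Omega R).
Variables (Xs Xnn : nat -> Omega -> T) (eta : T -> R) (M : R).
Hypothesis dist_metric : is_metric dist.
Hypothesis measurable_metric : @measurable _ T = <<s metric_open dist >>.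
Hypothesis measurable_Xs : forall i, measurable_fun setT (Xs i).
Hypothesis Xs_indep : mutually_independent P Xs.
Hypothesis Xs_ident : identically_distributed P Xs.
Hypothesis measurable_eta : measurable_fun setT eta.
Hypothesis eta_bounded : forall y, `|eta y| <= M.
Hypothesis measurable_Xnn : forall n, measurable_fun setT (Xnn n).
Hypothesis Xnn_nearest : forall n w k,
  (1 <= k <= n)%N -> dist x (Xnn n w) <= dist x (Xs k w).

Lemma measurable_sphere_term n r : measurable_fun setT
  (fun w => (\1_(sphere dist x r) (Xnn n w) : R) * `|eta (Xnn n w) - eta x|).
Proof.
apply: measurable_funM.
  exact: measurableT_comp (measurable_indic (measurable_sphere _ _ dist_metric
    measurable_metric r)) (measurable_Xnn n).
apply: measurableT_comp (@normr_measurable R setT) _.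
exact: measurable_funB (measurableT_comp measurable_eta (measurable_Xnn n))
  (measurable_cst _).
Qed.

(* The integrand vanishes unless all of X_1, ..., X_n avoid B_r(x), and is
   at most 2M; hence its expectation is at most 2M (1 - P_X(B_r(x)))^n. *)
Lemma sphere_term_le_avoid n r :
  (\int[P]_w ((\1_(sphere dist x r) (Xnn n w) : R) * `|eta (Xnn n w) - eta x|)%:E
    <= ((M + M) * (1 - fine (law P (Xs 0%N) (oball dist x r))) ^+ n)%:E)%E.
Proof.
have M_ge0 : 0 <= M := le_trans (normr_ge0 _) (eta_bounded x).
have mB := measurable_oball _ x dist_metric measurable_metric r.
have mE := measurable_avoid_event _ measurable_Xs n _ mB.
rewrite EFinM -(prob_avoid_event P _ measurable_Xs Xs_indep Xs_ident n _ mB).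
apply: integral_le_scaled_indic mE (measurable_sphere_term n r) _ _; first lra.
move=> w; rewrite !indicE mulr_ge0 //=.
have [on_sphere|off_sphere] := pselect (sphere dist x r (Xnn n w)).
  rewrite mem_set // mul1r mem_set ?mulr1.
    exact: le_trans (ler_normB _ _) (lerD (eta_bounded _) (eta_bounded _)).
  by apply: nearest_on_sphere_avoid on_sphere; exact: Xnn_nearest.
by rewrite memNset // mul0r mulr_ge0 //; lra.
Qed.

Lemma sphere_term_le n r :
  (\int[P]_w ((\1_(sphere dist x r) (Xnn n w) : R) * `|eta (Xnn n w) - eta x|)%:E
    <= ((M + M) / (1 + n%:R * fine (law P (Xs 0%N) (oball dist x r))))%:E)%E.
Proof.
have M_ge0 : 0 <= M := le_trans (normr_ge0 _) (eta_bounded x).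
have mB := measurable_oball _ x dist_metric measurable_metric r.
set q := fine _; have q_ge0 : 0 <= q := law_fine_ge0 P Xs _.
have q_le1 : q <= 1 := law_fine_le1 P _ measurable_Xs _ mB.
apply: le_trans (sphere_term_le_avoid n r) _.
rewrite lee_fin ler_pdivlMr; last by have : 0 <= n%:R :> R by []; nra.
rewrite -mulrA -[leRHS]mulr1 ler_wpM2l //; first lra.
exact: bernoulli_ineq.
Qed.

End SphereTerm.

Theorem mainTheorem7 (R : realType) (dT : measure_display) (T : measurableType dT)
  (dist : T -> T -> R) (dO : measure_display) (Omega : measurableType dO)
  (P : probability Omega R) (Xs : nat -> Omega -> T)
  (x : T) (eta : T -> R) (Xnn : nat -> Omega -> T)
  (m : nat -> nat) (rho : nat -> R) :
  is_metric dist ->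
  @measurable _ T = <<s metric_open dist >> ->
  (forall i, measurable_fun setT (Xs i)) ->
  mutually_independent P Xs ->
  identically_distributed P Xs ->
  (forall r : R, 0 < r -> (0 < law P (Xs 0%N) (cball dist x r))%E) ->
  measurable_fun setT eta ->
  (exists M : R, forall y, `|eta y| <= M) ->
  (forall n, measurable_fun setT (Xnn n)) ->
  (forall n w, (1 <= n)%N ->
     (exists2 i, (1 <= i <= n)%N & Xnn n w = Xs i w) /\
     (forall k, (1 <= k <= n)%N -> dist x (Xnn n w) <= dist x (Xs k w))) ->
  (forall j, (m j < m j.+1)%N) ->
  (forall j, 0 < rho j) ->
  (exists2 K : R, 0 <= K & forall j,
     (law P (Xs 0%N) (sphere dist x (rho j))
        <= K%:E * law P (Xs 0%N) (oball dist x (rho j)))%E) ->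
  (fun j => ((m j)%:R%:E * law P (Xs 0%N) (cball dist x (rho j)))%E)
     @ \oo --> +oo%E ->
  (fun j => (\int[P]_w
     ((\1_(sphere dist x (rho j)) (Xnn (m j) w) : R)
        * `|eta (Xnn (m j) w) - eta x|)%:E)%E)
     @ \oo --> 0%E.
Proof.
move=> dist_metric measurable_metric measurable_Xs Xs_indep Xs_ident _
  measurable_eta [M eta_bounded] measurable_Xnn nearest _ _ [K K_ge0 sphere_le]
  mass_infty.
have M_ge0 : 0 <= M := le_trans (normr_ge0 _) (eta_bounded x).
pose q j := fine (law P (Xs 0%N) (oball dist x (rho j))).
have Xnn_nearest n w k : (1 <= k <= n)%N -> dist x (Xnn n w) <= dist x (Xs k w).
  by move=> /andP[k1 kn]; apply: (nearest n w (leq_trans k1 kn)).2; rewrite k1.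
(* By (1), P_X(\bar B_{rho_j}) <= (1 + K) q_j, so (2) forces m_j q_j -> +oo. *)
have mq_infty : (fun j => (m j)%:R * q j) @ \oo --> +oo.
  apply: (@cvgey_scaled_dominated _ _ _ (1 + K)) mass_infty; first lra.
  move=> j; rewrite mulrCA EFinM (cballE dist); apply: lee_wpmul2l => //.
  apply: law_setU_le => //; [exact: measurable_oball | exact: measurable_sphere].
apply: (squeeze_cvge (f := fun=> 0%E)
  (h := fun j => ((M + M) / (1 + (m j)%:R * q j))%:E)).
- apply: nearW => j; rewrite integral_ge0 /=; first exact: sphere_term_le.
  by move=> w _; rewrite lee_fin mulr_ge0 ?indicE.
- exact: cvg_cst.
- apply: cvg_EFin; first exact: nearW.
  by apply: cvg_div_one_plus_y => //; lra.
Qed.
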